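(* Let $\Sigma$ be a system as in the context and let $O=\mathcal{O}bs_n(A,C)$. Then the relation $\ker([O\ \ -O])\subseteq\mathbb R^n\times\mathbb R^n$ is total, satisfies conditions $(h_0)$–$(h_4)$ below with $R_1=R_2=O$, and has maximal dimension among all total relations $\mathcal R=\ker([R_1\ \ -R_2])\subseteq\mathbb R^n\times\mathbb R^n$ ($R_1,R_2$ real matrices with $n$ columns and the same number of rows) satisfying: $(h_0)$ $\mathrm{diag}(A,A)\mathcal R\subseteq\mathcal R$; $(h_1)$ $R_1B=R_2B$; $(h_2)$ $R_1G\mu=R_2G\mu$; $(h_3)$ $R_1GG^TR_1^T=R_2GG^TR_2^T$; $(h_4)$ $\mathcal R\subseteq\ker([C\ \ -C])$.
   Context: $\Sigma$: $x(t+1)=Ax(t)+Bu(t)+Gw(t)$, $y(t)=Cx(t)+\nu(t)$, $t\in\mathbb N$, $x\in\mathbb R^n$, $u\in\mathbb R^m$, $w\in\mathbb R^l$, $y,\nu\in\mathbb R^p$, where $(w(t))_t$ is i.i.d. $\mathcal N(\mu,I_l)$ and $(\nu(t))_t$ is i.i.d. $\mathcal N(0,\Psi)$. $\mathcal{O}bs_n(A,C)$ is the matrix obtained by stacking $C,CA,\dots,CA^{n-1}$ vertically. A relation $\mathcal R\subseteq\mathbb R^n\times\mathbb R^n$ is total if every $x$ is a first component and every $x'$ a second component of some pair in $\mathcal R$. *)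

From HB Require Import structures.
From mathcomp Require Import all_boot all_order all_algebra.
From mathcomp Require Import reals.
Set Implicit Arguments. Unset Strict Implicit. Unset Printing Implicit Defensive.
Import Order.TTheory GRing.Theory Num.Theory.
Local Open Scope ring_scope.

Definition Obs {R : realType} (n p : nat) (A : 'M[R]_n) (C : 'M[R]_(p, n))
  : 'M[R]_(\sum_(i < n) p, n) := \mxcol_(i < n) (C *m A ^+ i).

(* The relation ker([R1 -R2]) as a predicate on 'cV_(n+n) (pairs (x,x')
   are represented by col_mx x x'). *)
Definition kerrel {R : realType} (k n : nat) (R1 R2 : 'M[R]_(k, n))
  (z : 'cV[R]_(n + n)) : Prop := row_mx R1 (- R2) *m z = 0.

Definition kerrel_dim {R : realType} (k n : nat) (R1 R2 : 'M[R]_(k, n)) : nat :=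
  \rank (kermx (row_mx R1 (- R2))^T).

Definition total_rel {R : realType} (n : nat) (P : 'cV[R]_(n + n) -> Prop) : Prop :=
  (forall x : 'cV[R]_n, exists x' : 'cV[R]_n, P (col_mx x x')) /\
  (forall x' : 'cV[R]_n, exists x : 'cV[R]_n, P (col_mx x x')).

Definition conds_h {R : realType} (n m l p k : nat)
  (A : 'M[R]_n) (B : 'M[R]_(n, m)) (G : 'M[R]_(n, l)) (C : 'M[R]_(p, n))
  (mu : 'cV[R]_l) (R1 R2 : 'M[R]_(k, n)) : Prop :=
  [/\ (forall z, kerrel R1 R2 z -> kerrel R1 R2 (block_mx A 0 0 A *m z)),
      R1 *m B = R2 *m B,
      R1 *m G *m mu = R2 *m G *m mu,
      R1 *m G *m G^T *m R1^T = R2 *m G *m G^T *m R2^T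
    & (forall z, kerrel R1 R2 z -> kerrel C C z)].

From HB Require Import structures.
From mathcomp Require Import all_boot all_order all_algebra.
From mathcomp Require Import reals.
Import Order.TTheory GRing.Theory Num.Theory.
Local Open Scope ring_scope.

Set Implicit Arguments. Unset Strict Implicit.

(* By Cayley-Hamilton every power A^j is a combination of I, A, ..., A^(n-1),
   so ker Obs_n(A,C) = {x | C A^j x = 0 for all j} is the largest A-invariant
   subspace contained in ker C.  Hence ker([O -O]), i.e. "O x = O x'", is
   diag(A,A)-invariant and inside ker([C -C]); conversely, iterating (h0) and
   applying (h4) shows that any relation satisfying (h0) and (h4) is contained
   in ker([O -O]), which bounds its dimension. *)

Section PowersOfMatrix.
Variable F : fieldType.

Lemma horner_mx_coef_wide n (A : 'M[F]_n.+1) k (q : {poly F}) :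
  (size q <= k)%N -> horner_mx A q = \sum_(i < k) q`_i *: A ^+ i.
Proof.
move=> le_q_k; rewrite /horner_mx /horner_morph.
rewrite (horner_coef_wide _ (leq_trans (size_poly _ _) le_q_k)).
by apply: eq_bigr => i _; rewrite coef_map /= -mulmxE mul_scalar_mx.
Qed.

Lemma expr_mx_mod_char n (A : 'M[F]_n.+1) j :
  A ^+ j = horner_mx A ('X^j %% char_poly A).
Proof.
rewrite -{1}(horner_mx_X A) -rmorphXn /= {1}(divp_eq 'X^j (char_poly A)).
by rewrite rmorphD rmorphM /= Cayley_Hamilton mulr0 add0r.
Qed.

Lemma expr_mx_low_powers n (A : 'M[F]_n) j :
  exists c : 'I_n -> F, A ^+ j = \sum_(i < n) c i *: A ^+ i.
Proof.
case: n A => [|n] A; first by exists (fun=> 0); rewrite [LHS]flatmx0 [RHS]flatmx0.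
exists (fun i => ('X^j %% char_poly A)`_i).
rewrite expr_mx_mod_char (@horner_mx_coef_wide _ _ n.+1) // -ltnS -(size_char_poly A).
by rewrite ltn_modpN0 // -size_poly_eq0 size_char_poly.
Qed.

Lemma mulmx_expr_eq0 n p (A : 'M[F]_n) (C : 'M[F]_(p, n)) (d : 'cV[F]_n) :
  (forall i : 'I_n, C *m A ^+ i *m d = 0) -> forall j, C *m A ^+ j *m d = 0.
Proof.
move=> Hd j; have [c ->] := expr_mx_low_powers A j.
rewrite mulmx_sumr mulmx_suml big1 // => i _.
by rewrite -scalemxAr -scalemxAl Hd scaler0.
Qed.

Lemma kermx_tr_rank_le k1 k2 N (M1 : 'M[F]_(k1, N)) (M2 : 'M[F]_(k2, N)) :
  (forall z : 'cV_N, M1 *m z = 0 -> M2 *m z = 0) ->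
  (\rank (kermx M1^T) <= \rank (kermx M2^T))%N.
Proof.
move=> sub12; apply/mxrankS/sub_kermxP/row_matrixP => i.
have v1 : M1 *m (row i (kermx M1^T))^T = 0.
  by apply: trmx_inj; rewrite trmx_mul trmxK -row_mul mulmx_ker row0 trmx0.
by rewrite row_mul row0 -[LHS]trmxK trmx_mul trmxK sub12 // trmx0.
Qed.

End PowersOfMatrix.

Section Relations.
Variable R : realType.

Lemma kerrel_col k n (R1 R2 : 'M[R]_(k, n)) x x' :
  kerrel R1 R2 (col_mx x x') <-> R1 *m x = R2 *m x'.
Proof.
rewrite /kerrel mul_row_col mulNmx.
by split => [/eqP|->]; rewrite ?subrr // subr_eq0 => /eqP.
Qed.

Lemma kerrel_dim_le k1 k2 n (R1 R2 : 'M[R]_(k1, n)) (S1 S2 : 'M[R]_(k2, n)) :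
  (forall z, kerrel R1 R2 z -> kerrel S1 S2 z) ->
  (kerrel_dim R1 R2 <= kerrel_dim S1 S2)%N.
Proof. exact: kermx_tr_rank_le. Qed.

Lemma block_diag_mul_col n (A : 'M[R]_n) (x x' : 'cV[R]_n) :
  block_mx A 0 0 A *m col_mx x x' = col_mx (A *m x) (A *m x').
Proof. by rewrite mul_block_col !mul0mx addr0 add0r. Qed.

Lemma Obs_mul_eq n p (A : 'M[R]_n) (C : 'M[R]_(p, n)) (x x' : 'cV[R]_n) :
  Obs A C *m x = Obs A C *m x' <->
  forall i : 'I_n, C *m A ^+ i *m x = C *m A ^+ i *m x'.
Proof. by rewrite /Obs !mxcol_mul; split => /eq_mxcolP. Qed.

Lemma Obs_mul_eq_expr n p (A : 'M[R]_n) (C : 'M[R]_(p, n)) (x x' : 'cV[R]_n) :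
  Obs A C *m x = Obs A C *m x' -> forall j, C *m A ^+ j *m x = C *m A ^+ j *m x'.
Proof.
move/Obs_mul_eq => Hxx' j; apply/eqP; rewrite -subr_eq0 -mulmxBr; apply/eqP.
by apply: mulmx_expr_eq0 => i; rewrite mulmxBr Hxx' subrr.
Qed.

Lemma kerrel_Obs_stable n p (A : 'M[R]_n) (C : 'M[R]_(p, n)) z :
  kerrel (Obs A C) (Obs A C) z ->
  kerrel (Obs A C) (Obs A C) (block_mx A 0 0 A *m z).
Proof.
rewrite -[z]vsubmxK block_diag_mul_col !kerrel_col => /Obs_mul_eq_expr Hz.
by apply/Obs_mul_eq => i; have := Hz i.+1; rewrite exprSr -mulmxE !mulmxA.
Qed.

Lemma kerrel_Obs_sub_C n p (A : 'M[R]_n) (C : 'M[R]_(p, n)) z :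
  kerrel (Obs A C) (Obs A C) z -> kerrel C C z.
Proof.
rewrite -[z]vsubmxK !kerrel_col => /Obs_mul_eq_expr/(_ 0%N).
by rewrite expr0 !mulmx1.
Qed.

Lemma kerrel_sub_Obs k n p (A : 'M[R]_n) (C : 'M[R]_(p, n)) (R1 R2 : 'M[R]_(k, n)) :
  (forall z, kerrel R1 R2 z -> kerrel R1 R2 (block_mx A 0 0 A *m z)) ->
  (forall z, kerrel R1 R2 z -> kerrel C C z) ->
  forall z, kerrel R1 R2 z -> kerrel (Obs A C) (Obs A C) z.
Proof.
move=> stableA subC z; rewrite -[z]vsubmxK kerrel_col => Hz.
have HAi i : kerrel R1 R2 (col_mx (A ^+ i *m usubmx z) (A ^+ i *m dsubmx z)).
  elim: i => [|i IHi]; first by rewrite expr0 !mul1mx; apply/kerrel_col.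
  by rewrite exprS -mulmxE -!mulmxA -block_diag_mul_col; apply: stableA.
apply/kerrel_col/Obs_mul_eq => i; rewrite -!mulmxA; apply/kerrel_col/subC/HAi.
Qed.

End Relations.

Theorem theorem7 (R : realType) (n m l p : nat)
  (A : 'M[R]_n) (B : 'M[R]_(n, m)) (G : 'M[R]_(n, l)) (C : 'M[R]_(p, n))
  (mu : 'cV[R]_l) :
  let O := Obs A C in
  [/\ total_rel (kerrel O O),
      conds_h A B G C mu O O
    & forall (k : nat) (R1 R2 : 'M[R]_(k, n)),
        total_rel (kerrel R1 R2) -> conds_h A B G C mu R1 R2 ->
        (kerrel_dim R1 R2 <= kerrel_dim O O)%N].
Proof.
move=> O; split.
- by split=> x; exists x; apply/kerrel_col.
- by split=> // z; [apply: kerrel_Obs_stable | apply: kerrel_Obs_sub_C].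
- move=> k R1 R2 _ [stableA _ _ _ subC].
  exact/kerrel_dim_le/kerrel_sub_Obs.
Qed.
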